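(* Let $G=(V(G),E(G),\ell)$ be an $n$-order node-labeled graph, $k\ge 2$, and let $\mathbf{F}\in\mathbb{R}^{n\times d}$ be a node feature matrix consistent with $\ell$. Then for all $t\ge 1$ there exist functions $g^{(0)},\dots,g^{(t)}\colon V(G)^k\to\mathbb{R}$, with $g^{(0)}$ consistent with the initial colors, scalars $\alpha_1,\dots,\alpha_k,\beta_1,\dots,\beta_k$ and feed-forward networks $\mathsf{FFN}$ with $$g^{(s)}(\mathbf{u})=\mathsf{FFN}\Big(g^{(s-1)}(\mathbf{u})+\sum_{j\in[k]}\Big(\alpha_j\sum_{w\in\Delta_j(\mathbf{u})}g^{(s-1)}(\phi_j(\mathbf{u},w))+\beta_j\sum_{w\in V(G)\setminus\Delta_j(\mathbf{u})}g^{(s-1)}(\phi_j(\mathbf{u},w))\Big)\Big)$$ for $1\le s\le t$, such that for all $\mathbf{u},\mathbf{v}\in V(G)^k$, $$C^{k,\mathrm{M}}_t(\mathbf{u})=C^{k,\mathrm{M}}_t(\mathbf{v})\iff g^{(t)}(\mathbf{u})=g^{(t)}(\mathbf{v}).$$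
   Context: $\phi_j(\mathbf{u},w)$ replaces the $j$-th entry of $\mathbf{u}=(u_1,\dots,u_k)$ by $w$; $\Delta_j(\mathbf{u})=N(u_j)$ is the set of nodes adjacent to $u_j$. $C^{k,\mathrm{M}}_t$ is the coloring of the $\delta$-$k$-WL: initial colors are determined by the atomic type of the tuple and the node labels, and $C^{k,\mathrm{M}}_t(\mathbf{v})=\mathsf{RELABEL}\big(C^{k,\mathrm{M}}_{t-1}(\mathbf{v}),(\{\!\{(C^{k,\mathrm{M}}_{t-1}(\phi_j(\mathbf{v},w)),\mathrm{adj}(v_j,w))\mid w\in V(G)\}\!\})_{j=1}^k\big)$, with $\mathrm{adj}(v,w)=1$ if $(v,w)\in E(G)$ and $0$ otherwise, and $\mathsf{RELABEL}$ injective into fresh natural numbers. ''$g^{(0)}$ consistent with the initial colors'' means $g^{(0)}(\mathbf{u})=g^{(0)}(\mathbf{v})$ iff $\mathbf{u},\mathbf{v}$ have the same initial color. *)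

From HB Require Import structures.
From mathcomp Require Import all_boot all_order all_algebra.
From mathcomp Require Import reals.
Set Implicit Arguments. Unset Strict Implicit. Unset Printing Implicit Defensive.
Import Order.TTheory GRing.Theory Num.Theory.

Definition simple_graph (V : finType) (e : rel V) : Prop :=
  symmetric e /\ irreflexive e.

Definition ktuple (V : finType) (k : nat) := {ffun 'I_k -> V}.

Definition phi (V : finType) (k : nat) (u : ktuple V k) (j : 'I_k) (w : V)
  : ktuple V k := [ffun i => if i == j then w else u i].

(* Initial color: atomic type (equalities and adjacencies between entries)
   together with the node labels; injectively encoded into nat by pickle. *)
Definition init_color (V : finType) (L : countType) (e : rel V) (l : V -> L)
  (k : nat) (u : ktuple V k) : nat :=
  pickle ([ffun ij : 'I_k * 'I_k => (u ij.1 == u ij.2, e (u ij.1) (u ij.2))],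
          [ffun i : 'I_k => l (u i)]).

(* Multiset {{ (C(phi_j(u,w)), adj(u_j,w)) | w in V }}, represented canonically
   as a sorted list of the (injective) codes of its elements. *)
Definition nbr_multiset (V : finType) (e : rel V) (k : nat)
  (C : ktuple V k -> nat) (u : ktuple V k) (j : 'I_k) : seq nat :=
  sort leq [seq pickle (C (phi u j w), e (u j) w) | w <- enum V].

(* C^{k,M}_t ; RELABEL is the injective map pickle *)
Fixpoint deltaWL (V : finType) (L : countType) (e : rel V) (l : V -> L)
  (k : nat) (t : nat) : ktuple V k -> nat :=
  match t with
  | 0 => @init_color V L e l k
  | t'.+1 => fun u =>
      let C := @deltaWL V L e l k t' in
      pickle (C u, [seq nbr_multiset e C u j | j <- enum 'I_k])
  end.

Inductive ffn (R : realType) : nat -> nat -> Type :=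
| ffn_out (a b : nat) (W : 'M[R]_(a, b)) (c : 'rV[R]_b) : ffn R a b
| ffn_layer (a b c : nat) (W : 'M[R]_(a, b)) (bias : 'rV[R]_b)
    (rest : ffn R b c) : ffn R a c.

Definition relu (R : realType) (x : R) : R := Num.max x 0%R.

Fixpoint ffn_eval (R : realType) (a b : nat) (N : ffn R a b) : 'rV[R]_a -> 'rV[R]_b :=
  match N with
  | ffn_out _ _ W c => fun x => (x *m W + c)%R
  | ffn_layer _ _ _ W bias rest =>
      fun x => ffn_eval rest (map_mx (@relu R) (x *m W + bias)%R)
  end.

Definition FFN (R : realType) (N : ffn R 1 1) (x : R) : R :=
  ffn_eval N (const_mx x) ord0 ord0.

Arguments deltaWL {V L} e l k t _.

(* Number the colours of round s by their rank 0 <= r < M in a fixed palette,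
   M the number of k-tuples, and put g^(s)(u) = B^(rank of C_s(u)) with
   B = k|V| + 2.  With alpha_j = B^(b(j,1) M) and beta_j = B^(b(j,0) M), where
   b is an injection of 'I_k * bool into positive integers, the aggregated
   input at u is a sum of k|V| + 1 powers of B: one exponent is the rank of
   C_s(u), and for every j and w the exponent b(j, adj(u_j, w)) M + rank of
   C_s(phi_j(u, w)) lies in the band reserved for (j, adj(u_j, w)).  Fewer
   than B summands cause no carries, so the base-B digits of the aggregate
   are the multiplicities of these exponents, which determine C_(s+1)(u).
   Hence g^(s+1) is a function of the aggregate on the finitely many tuples,
   and every function on a finite set of reals is computed by a ReLU network
   with one hidden layer. *)

From mathcomp Require Import all_boot all_order all_algebra.
From mathcomp Require Import reals.
Import Order.TTheory GRing.Theory Num.Theory.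

Set Implicit Arguments.
Unset Strict Implicit.
Unset Printing Implicit Defensive.

Lemma sum_expn_count0 (B : nat) (s : seq nat) :
  \sum_(x <- s) B ^ x =
  count_mem 0 s + B * \sum_(x <- [seq y.-1 | y <- s & 0 < y]) B ^ x.
Proof.
elim: s => [|[|x] s IHs]; first by rewrite !big_nil muln0.
  by rewrite big_cons IHs expn0 addnA.
by rewrite /= !big_cons IHs mulnDr expnS addnCA.
Qed.

Lemma count_mem_predn (s : seq nat) (x : nat) :
  count_mem x.+1 s = count_mem x [seq y.-1 | y <- s & 0 < y].
Proof. by elim: s => [|[|y] s IHs] //=; rewrite IHs eqSS. Qed.

Lemma count_mem_expn_digit (B x : nat) (s : seq nat) : size s < B ->
  count_mem x s = (\sum_(y <- s) B ^ y) %/ B ^ x %% B.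
Proof.
have count0_lt s' : size s' < B -> count_mem 0 s' < B.
  exact/leq_ltn_trans/count_size.
elim: x s => [|x IHx] s sB; rewrite sum_expn_count0 addnC mulnC.
  by rewrite expn0 divn1 modnMDl modn_small ?count0_lt.
have B_gt0 : 0 < B by apply: leq_ltn_trans sB.
rewrite expnS divnMA divnMDl // (divn_small (count0_lt _ sB)) addn0.
rewrite count_mem_predn -IHx // size_map size_filter.
exact/leq_ltn_trans/sB/count_size.
Qed.

Lemma eqn_mul_add_small (m a b i j : nat) : i < m -> j < m ->
  (a * m + i == b * m + j) = (a == b) && (i == j).
Proof.
move=> im jm; have m_gt0 : 0 < m by apply: leq_ltn_trans im.
apply/eqP/andP => [E|[/eqP-> /eqP->] //]; split; apply/eqP.
  by have := congr1 (divn^~ m) E; rewrite /= !divnMDl // !divn_small // !addn0.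
by have := congr1 (modn^~ m) E; rewrite /= !modnMDl !modn_small.
Qed.

Section ColorRank.

Variables (T : finType) (Y : eqType) (C : T -> Y).

Definition palette : seq Y := undup [seq C u | u <- enum T].

Definition color_rank (u : T) : nat := index (C u) palette.

Lemma mem_palette (u : T) : C u \in palette.
Proof. by rewrite mem_undup map_f ?mem_enum. Qed.

Lemma color_rank_lt (u : T) : color_rank u < #|T|.
Proof.
rewrite cardE -(size_map C); apply: leq_trans (size_undup _).
by rewrite index_mem mem_palette.
Qed.

Lemma nth_color_rank (y0 : Y) (u : T) : nth y0 palette (color_rank u) = C u.
Proof. exact/nth_index/mem_palette. Qed.

Lemma eq_color_rank (u v : T) : (color_rank u == color_rank v) = (C u == C v).
Proof.
apply/eqP/eqP => [E|]; last by rewrite /color_rank => ->.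
by rewrite -(nth_color_rank (C u) u) E nth_color_rank.
Qed.

End ColorRank.

Section ReluInterpolation.

Variable R : realType.

Local Open Scope ring_scope.

Definition relu_comb (c0 : R) (ps : seq (R * R)) (x : R) : R :=
  c0 + \sum_(p <- ps) p.1 * relu (p.2 - x).

Lemma relu_comb_ffn (c0 : R) (ps : seq (R * R)) :
  exists N : ffn R 1 1, FFN N =1 relu_comb c0 ps.
Proof.
pose W : 'M[R]_(1, size ps) := const_mx (-1).
pose bias : 'rV[R]_(size ps) := \row_i (nth (0, 0) ps i).2.
pose W2 : 'M[R]_(size ps, 1) := \col_i (nth (0, 0) ps i).1.
exists (ffn_layer W bias (ffn_out W2 (const_mx c0))) => x.
rewrite /FFN /= !mxE /relu_comb addrC (big_nth (0, 0)) big_mkord.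
congr (_ + _); apply: eq_bigr => i _.
by rewrite !mxE big_ord1 !mxE mulrN1 addrC mulrC.
Qed.

Lemma relu_comb_interp_sorted (f : R -> R) (xs : seq R) : sorted <%R xs ->
  exists c0 ps, {in xs, relu_comb c0 ps =1 f}.
Proof.
elim: xs => [|m [|m' xs] IHxs] /=; first by exists 0, [::].
  exists (f m), [::] => x; rewrite mem_seq1 => /eqP ->.
  by rewrite /relu_comb big_nil addr0.
case/andP => mm' sorted_xs; have [c0 [ps interp_xs]] := IHxs sorted_xs.
pose a := (f m - relu_comb c0 ps m) / (m' - m).
exists c0, ((a, m') :: ps) => x.
have -> : relu_comb c0 ((a, m') :: ps) x = relu_comb c0 ps x + a * relu (m' - x).
  by rewrite /relu_comb big_cons /= addrCA addrC.
rewrite in_cons => /predU1P [->|x_xs].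
  by rewrite /relu max_l ?subr_ge0 ?ltW // divfK ?subrKC // subr_eq0 gt_eqF.
have m'x : m' <= x.
  move: x_xs; rewrite in_cons => /predU1P [->//|].
  by move/(allP (order_path_min lt_trans sorted_xs))/ltW.
by rewrite interp_xs // /relu max_r ?mulr0 ?addr0 // subr_le0.
Qed.

Lemma ffn_interp (f : R -> R) (xs : seq R) :
  exists N : ffn R 1 1, {in xs, FFN N =1 f}.
Proof.
have sorted_xs : sorted <%R (sort <=%R (undup xs)).
  by rewrite sort_lt_sorted undup_uniq.
have [c0 [ps interp]] := relu_comb_interp_sorted f sorted_xs.
have [N NE] := relu_comb_ffn c0 ps.
by exists N => x x_xs; rewrite NE interp // mem_sort mem_undup.
Qed.

Lemma ffn_factor (T : finType) (a h : T -> R) :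
  (forall u v, a u = a v -> h u = h v) ->
  exists N : ffn R 1 1, forall u, h u = FFN N (a u).
Proof.
move=> h_a.
pose f r := if [pick u | a u == r] is Some u then h u else 0.
have [N interp] := ffn_interp f [seq a u | u <- enum T].
exists N => u; rewrite interp ?map_f ?mem_enum // /f.
by case: pickP => [v /eqP /h_a -> // | /(_ u)]; rewrite eqxx.
Qed.

End ReluInterpolation.

Section DeltaWLEncoding.

Variables (R : realType) (V : finType) (L : countType) (e : rel V) (l : V -> L).
Variable k : nat.

Local Notation tuple := (ktuple V k).
Local Notation color s := (deltaWL e l k s).
Local Notation rank s := (color_rank (color s)).
Local Notation M := #|{: tuple}|.
Local Notation B := (k * #|V|).+2.

Definition aggregate (h : tuple -> R) (alpha beta : 'I_k -> R) (u : tuple) : R :=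
  (h u + \sum_(j < k)
           (alpha j * (\sum_(w | e (u j) w) h (phi u j w)) +
            beta j * (\sum_(w | ~~ e (u j) w) h (phi u j w))))%R.

Definition band (j : 'I_k) (b : bool) : nat := (enum_rank (j, b)).+1.

Definition wl_value (s : nat) (u : tuple) : R := (B ^ rank s u)%:R.

Definition wl_weight (b : bool) (j : 'I_k) : R := (B ^ (band j b * M))%:R.

Definition wl_exponents (s : nat) (u : tuple) : seq nat :=
  rank s u :: [seq band j (e (u j) w) * M + rank s (phi u j w)
              | j <- enum 'I_k, w <- enum V].

Lemma wl_value_eq (s : nat) (u v : tuple) :
  wl_value s u = wl_value s v <-> color s u = color s v.
Proof.
have value_eqE : (wl_value s u == wl_value s v) = (color s u == color s v).
  by rewrite eqr_nat eqn_exp2l // eq_color_rank.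
split => [/eqP|color_uv]; first by rewrite value_eqE => /eqP.
by apply/eqP; rewrite value_eqE color_uv.
Qed.

Lemma size_wl_exponents (s : nat) (u : tuple) :
  size (wl_exponents s u) = (k * #|V|).+1.
Proof. by rewrite /= size_allpairs size_enum_ord cardE. Qed.

Lemma aggregate_wl_value (s : nat) (u : tuple) :
  aggregate (wl_value s) (wl_weight true) (wl_weight false) u =
  (\sum_(x <- wl_exponents s u) B ^ x)%:R%R.
Proof.
rewrite big_cons big_flatten /= big_map big_enum natrD natr_sum.
congr (_ + _)%R.
apply: eq_bigr => j _.
rewrite big_map big_enum /= natr_sum [RHS](bigID (e (u j))) /=.
congr (_ + _)%R; rewrite mulr_sumr; apply: eq_bigr => w adj_w.
  by rewrite adj_w expnD natrM.
by rewrite (negbTE adj_w) expnD natrM.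
Qed.

Lemma eq_band (j j' : 'I_k) (b b' : bool) :
  (band j b == band j' b') = (j == j') && (b == b').
Proof.
rewrite eqSS -[_ == _]/(enum_rank (j, b) == enum_rank (j', b')).
by rewrite (inj_eq enum_rank_inj) xpair_eqE.
Qed.

Lemma leq_band_offset (j : 'I_k) (b : bool) (r : nat) : M <= band j b * M + r.
Proof. exact: leq_trans (leq_pmull M (ltn0Sn _)) (leq_addr _ _). Qed.

Lemma count_wl_exponents_self (s : nat) (u : tuple) (i : nat) : i < M ->
  count_mem i (wl_exponents s u) = (rank s u == i).
Proof.
move=> iM; rewrite /= (count_memPn _) ?addn0 //.
apply/allpairsP => -[[j w] [_ _ /= i_eq]].
by move: iM; rewrite i_eq ltnNge leq_band_offset.
Qed.

Lemma count_wl_exponents_band (s : nat) (u : tuple) (j : 'I_k) (b : bool)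
    (i : nat) : i < M ->
  count_mem (band j b * M + i) (wl_exponents s u) =
  count (fun w => (e (u j) w == b) && (rank s (phi u j w) == i)) (enum V).
Proof.
move=> iM; rewrite /= ltn_eqF ?add0n; last first.
  exact: leq_trans (color_rank_lt _ _) (leq_band_offset _ _ _).
rewrite count_flatten sumnE !big_map -enumT.
rewrite (bigD1_seq j) ?mem_enum ?enum_uniq //= big1_seq ?addn0.
  rewrite count_map; apply: eq_count => w /=.
  by rewrite eqn_mul_add_small ?color_rank_lt // eq_band eqxx.
move=> j' /andP [j'j _]; apply/eqP; rewrite eqn0Ngt -has_count has_map.
apply/hasPn => w _ /=.
by rewrite eqn_mul_add_small ?color_rank_lt // eq_band (negPf j'j).
Qed.

Lemma nbr_multiset_perm_rank (C : tuple -> nat) (u v : tuple) (j : 'I_k) :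
  perm_eq [seq (color_rank C (phi u j w), e (u j) w) | w <- enum V]
          [seq (color_rank C (phi v j w), e (v j) w) | w <- enum V] ->
  nbr_multiset e C u j = nbr_multiset e C v j.
Proof.
pose decode (p : nat * bool) := pickle (nth 0 (palette C) p.1, p.2).
have nbrE x : nbr_multiset e C x j =
    sort leq (map decode
      [seq (color_rank C (phi x j w), e (x j) w) | w <- enum V]).
  rewrite /nbr_multiset -map_comp; congr sort; apply: eq_map => w.
  by rewrite /decode /= nth_color_rank.
move=> perm_uv; rewrite !nbrE; apply/perm_sortP; last exact: perm_map.
- exact: leq_total.
- exact: leq_trans.
- exact: anti_leq.
Qed.

Lemma perm_nbr_ranks (s : nat) (u v : tuple) (j : 'I_k) :
  perm_eq (wl_exponents s u) (wl_exponents s v) ->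
  perm_eq [seq (rank s (phi u j w), e (u j) w) | w <- enum V]
          [seq (rank s (phi v j w), e (v j) w) | w <- enum V].
Proof.
move/permP => count_uv; apply/allP => -[i b] _; apply/eqP.
have [iM|Mi] := ltnP i M.
  have countE x :
      count_mem (i, b) [seq (rank s (phi x j w), e (x j) w) | w <- enum V] =
      count (fun w => (e (x j) w == b) && (rank s (phi x j w) == i)) (enum V).
    by rewrite count_map; apply: eq_count => w; rewrite /= xpair_eqE andbC.
  by rewrite !countE -!count_wl_exponents_band //; apply: count_uv.
have count0 x :
    count_mem (i, b) [seq (rank s (phi x j w), e (x j) w) | w <- enum V] = 0.
  apply/count_memPn/mapP => -[w _ [rank_eq _]].
  by move: Mi; rewrite rank_eq leqNgt color_rank_lt.
by rewrite !count0.
Qed.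

Lemma perm_wl_exponents_color_succ (s : nat) (u v : tuple) :
  perm_eq (wl_exponents s u) (wl_exponents s v) -> color s.+1 u = color s.+1 v.
Proof.
move=> perm_uv; have /permP count_uv := perm_uv.
have color_uv : color s u = color s v.
  apply/eqP; rewrite -(eq_color_rank (color s)) eq_sym.
  have := count_uv (pred1 (rank s u)).
  by rewrite !count_wl_exponents_self ?color_rank_lt // eqxx; case: (_ == _).
rewrite /= color_uv; congr (pickle (_, _)); apply: eq_map => j.
exact/nbr_multiset_perm_rank/perm_nbr_ranks.
Qed.

Lemma aggregate_wl_value_color_succ (s : nat) (u v : tuple) :
  aggregate (wl_value s) (wl_weight true) (wl_weight false) u =
  aggregate (wl_value s) (wl_weight true) (wl_weight false) v ->
  color s.+1 u = color s.+1 v.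
Proof.
rewrite !aggregate_wl_value => /eqP; rewrite eqr_nat => /eqP sum_uv.
apply: perm_wl_exponents_color_succ; apply/allP => x _; apply/eqP.
by rewrite !(@count_mem_expn_digit B) ?size_wl_exponents // sum_uv.
Qed.

End DeltaWLEncoding.

Local Open Scope ring_scope.

Theorem corollaryI4 (R : realType) (V : finType) (L : countType)
  (e : rel V) (l : V -> L) (k d : nat) (F : V -> 'rV[R]_d) :
  simple_graph e ->
  (2 <= k)%N ->
  (forall x y : V, F x = F y <-> l x = l y) ->
  forall t : nat, (1 <= t)%N ->
  exists (g : nat -> ktuple V k -> R) (alpha beta : 'I_k -> R)
         (N : nat -> ffn R 1 1),
    (forall u v : ktuple V k,
        g 0%N u = g 0%N v <-> deltaWL e l k 0%N u = deltaWL e l k 0%N v) /\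
    (forall s : nat, (1 <= s <= t)%N -> forall u : ktuple V k,
        g s u = FFN (N s)
          (g s.-1 u +
           \sum_(j < k)
             (alpha j * (\sum_(w | e (u j) w) g s.-1 (phi u j w)) +
              beta j * (\sum_(w | ~~ e (u j) w) g s.-1 (phi u j w))))) /\
    (forall u v : ktuple V k,
        deltaWL e l k t u = deltaWL e l k t v <-> g t u = g t v).
Proof.
move=> _ _ _ t _.
pose g := wl_value R e l (k := k).
pose alpha := wl_weight R V (k := k) true.
pose beta := wl_weight R V (k := k) false.
have layer s : exists N : ffn R 1 1,
    forall u, g s.+1 u = FFN N (aggregate e (g s) alpha beta u).
  by apply: ffn_factor => u v /aggregate_wl_value_color_succ /wl_value_eq.
have [N N_layer] := boolp.choice layer.
exists g, alpha, beta, (fun s => N s.-1); split; first exact: wl_value_eq.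
split; last by move=> u v; split => /wl_value_eq.
by case=> // s _ u; apply: N_layer.
Qed.
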